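(* Let $L_t,M_t:(-\epsilon,\epsilon)\to SU(3)$ be smooth paths, and let $L'_0=L_0^{-1}\frac{dL_t}{dt}\big|_{t=0}$. Assume $$L_0=\begin{pmatrix}\lambda&0&0\\0&\lambda&0\\0&0&\lambda^{-2}\end{pmatrix},\qquad L'_0=\begin{pmatrix}i\alpha&0&0\\0&-i\alpha&0\\0&0&0\end{pmatrix},$$ where $\lambda$ is a complex number of modulus one and of infinite multiplicative order, and $\alpha\neq0$ is real. If $\frac{d}{dt}\mathrm{tr}(W_t)\big|_{t=0}=0$ for every word $W_t$ in $L_t$ and $M_t$, then $M_0\in G_\eta$ for some $\eta\in[0,2\pi)$.
   Context: A word in $L_t,M_t$ is a finite product of the matrices $L_t^{\pm1},M_t^{\pm1}$. For $\eta\in[0,2\pi)$, $G_\eta$ is the subgroup of $SU(3)$ consisting of matrices of the form $\begin{pmatrix}a&be^{-i\eta}&c\\ be^{i\eta}&a&ce^{i\eta}\\ c'&c'e^{-i\eta}&d\end{pmatrix}$ with $a,b,c,c',d\in\mathbb{C}$. *)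

From HB Require Import structures.
From mathcomp Require Import all_boot all_order all_algebra.
From mathcomp Require Import all_classical all_reals all_analysis.
From mathcomp Require Import complex.
Set Implicit Arguments. Unset Strict Implicit. Unset Printing Implicit Defensive.
Import Order.TTheory GRing.Theory Num.Theory.
Local Open Scope ring_scope.
Local Open Scope complex_scope.

Section Defs.
Variable R : realType.
Local Notation C := R[i].

Definition adjmx (A : 'M[C]_3) : 'M[C]_3 := (map_mx conjc A)^T.

Definition SU3 (A : 'M[C]_3) : Prop := A *m adjmx A = 1%:M /\ \det A = 1.

Definition cderive (f : R -> C) (t : R) : C :=
  (derive1 (fun s => complex.Re (f s)) t) +i* (derive1 (fun s => complex.Im (f s)) t).

Definition mderive (P : R -> 'M[C]_3) (t : R) : 'M[C]_3 :=
  \matrix_(i, j) cderive (fun s => P s i j) t.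

Definition smooth_on (eps : R) (f : R -> R) : Prop :=
  forall (n : nat) (t : R), - eps < t < eps -> derivable (derive1n n f) t 1.

Definition smooth_SU3_path (eps : R) (P : R -> 'M[C]_3) : Prop :=
  (forall t, - eps < t < eps -> SU3 (P t)) /\
  (forall i j, smooth_on eps (fun s => complex.Re (P s i j)) /\
               smooth_on eps (fun s => complex.Im (P s i j))).

(* a word in L_t, M_t: a letter (g, e) stands for (if g then L_t else M_t)
   raised to the power +1 (e = true) or -1 (e = false) *)
Definition letter_eval (L M : R -> 'M[C]_3) (t : R) (x : bool * bool) : 'M[C]_3 :=
  let A := if x.1 then L t else M t in if x.2 then A else invmx A.

Definition word_eval (L M : R -> 'M[C]_3) (w : seq (bool * bool)) (t : R) : 'M[C]_3 :=
  \prod_(x <- w) letter_eval L M t x.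

Definition expi (eta : R) : C := cos eta +i* sin eta.

Definition G_eta (eta : R) (A : 'M[C]_3) : Prop :=
  SU3 A /\ exists a b c c' d : C,
    A = \matrix_(i < 3, j < 3)
          nth 0 (nth [::] [:: [:: a; b * (expi eta)^-1; c];
                             [:: b * expi eta; a; c * expi eta];
                             [:: c'; c' * (expi eta)^-1; d]] i) j.

End Defs.

From HB Require Import structures.
From mathcomp Require Import all_boot all_order all_algebra.
From mathcomp Require Import all_classical all_reals all_analysis.
From mathcomp Require Import complex ring lra.
Import Order.TTheory GRing.Theory Num.Theory.
Local Open Scope ring_scope.
Local Open Scope complex_scope.
Set Implicit Arguments. Unset Strict Implicit. Unset Printing Implicit Defensive.

(* Differentiating tr W, tr (L W) and tr (L^2 W) at t = 0 gives three linear
   relations between the diagonal of W'_0 and W_0[0,0] - W_0[1,1], whose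
   coefficients form a Vandermonde-type system in lambda and lambda^-2 != lambda;
   hence W_0[0,0] = W_0[1,1] for every word W.  For the words M, M^2, M L M and
   M L M^-1 this gives m00 = m11, m02 m20 = m12 m21 and |m02| = |m12|, and the
   unitarity of M = M_0 then forces m12 = z m02, m20 = z m21, m10 = z^2 m01 for
   some z = e^(i eta), which is the shape of G_eta. *)

Section Matrix3.
Variable F : comNzRingType.

Definition diag3 (a b c : F) : 'M[F]_3 := diag_mx (\row_(i < 3) [:: a; b; c]`_i).

Lemma sum3 (G : 'I_3 -> F) : \sum_(k < 3) G k = G 0 + G 1 + G 2.
Proof.
rewrite !big_ord_recr big_ord0 /= add0r.
by congr (_ + _ + _); congr G; apply/val_inj.
Qed.

Lemma mxtrace3 (X : 'M[F]_3) : \tr X = X 0 0 + X 1 1 + X 2 2.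
Proof. exact: sum3. Qed.

Lemma mulmx3E (X Y : 'M[F]_3) i j :
  (X *m Y) i j = X i 0 * Y 0 j + X i 1 * Y 1 j + X i 2 * Y 2 j.
Proof. by rewrite mxE sum3. Qed.

Lemma diag3_mulE (a b c : F) (X : 'M[F]_3) i j :
  (diag3 a b c *m X) i j = [:: a; b; c]`_i * X i j.
Proof. by rewrite mul_diag_mx !mxE. Qed.

End Matrix3.

Section Diag3Idomain.
Variable F : idomainType.

Lemma diag_eq_of_moments (l m c y0 y1 d0 d1 d2 : F) :
  l != 0 -> c != 0 -> m != l ->
  d0 + d1 + d2 = 0 ->
  l * c * (y0 - y1) + l * (d0 + d1) + m * d2 = 0 ->
  2 * l ^+ 2 * c * (y0 - y1) + l ^+ 2 * (d0 + d1) + m ^+ 2 * d2 = 0 ->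
  y0 = y1.
Proof.
move=> l0 c0 ml E0 E1 E2.
have : (m - l) ^+ 2 * d2 = 0.
  transitivity ((2 * l ^+ 2 * c * (y0 - y1) + l ^+ 2 * (d0 + d1) + m ^+ 2 * d2)
     - 2 * l * (l * c * (y0 - y1) + l * (d0 + d1) + m * d2) + l ^+ 2 * (d0 + d1 + d2)).
    by ring.
  by rewrite E0 E1 E2; ring.
move/eqP; rewrite mulf_eq0 expf_eq0 subr_eq0 (negbTE ml) /= => /eqP d20.
have d01 : d0 + d1 = 0 by rewrite -E0 d20 addr0.
move: E1; rewrite d01 d20 !mulr0 !addr0.
by move/eqP; rewrite !mulf_eq0 (negbTE l0) (negbTE c0) subr_eq0 => /eqP.
Qed.

Lemma diag3_mul_entry_eq (l m : F) (X Y : 'M[F]_3) : m != l ->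
  (X *m (diag3 l l m *m Y)) 0 0 = (X *m (diag3 l l m *m Y)) 1 1 ->
  (X *m Y) 0 0 = (X *m Y) 1 1 ->
  X 0 2 * Y 2 0 = X 1 2 * Y 2 1.
Proof.
(* (X D Y)_ii = l (X Y)_ii + (m - l) X_i2 Y_2i *)
move=> ml; rewrite ![(X *m _) _ _]mulmx3E !diag3_mulE /= => E1 E2.
have : (m - l) * (X 0 2 * Y 2 0 - X 1 2 * Y 2 1) = 0.
  transitivity ((X 0 0 * (l * Y 0 0) + X 0 1 * (l * Y 1 0) + X 0 2 * (m * Y 2 0))
     - (X 1 0 * (l * Y 0 1) + X 1 1 * (l * Y 1 1) + X 1 2 * (m * Y 2 1))
     - l * ((X 0 0 * Y 0 0 + X 0 1 * Y 1 0 + X 0 2 * Y 2 0)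
            - (X 1 0 * Y 0 1 + X 1 1 * Y 1 1 + X 1 2 * Y 2 1))).
    by ring.
  by rewrite E1 E2 !subrr; ring.
by move/eqP; rewrite mulf_eq0 !subr_eq0 (negbTE ml) => /eqP.
Qed.

End Diag3Idomain.

Lemma norm_eq_exists_unit_sqr (F : numClosedFieldType) (a b : F) :
  `|a| = `|b| -> exists z : F, `|z| = 1 /\ b = z ^+ 2 * a.
Proof.
move=> ab; have [a0|a0] := eqVneq a 0.
  exists 1; rewrite normr1 a0 mulr0; split=> //.
  by apply: normr0_eq0; rewrite -ab a0 normr0.
exists (sqrtC (b / a)); rewrite sqrtCK divfK //; split=> //.
apply/eqP; rewrite -sqrp_eq1 // -normrX sqrtCK normf_div -ab divff //.
by rewrite normr_eq0.
Qed.

Section Paths.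
Variable R : realType.
Local Notation C := R[i].
Implicit Types (t : R) (f g : R -> C).
Local Notation Re := complex.Re.
Local Notation Im := complex.Im.

Definition is_cderive t f (df : C) : Prop :=
  is_derive t 1 (fun s => Re (f s)) (Re df) /\
  is_derive t 1 (fun s => Im (f s)) (Im df).

Lemma cderive_val t f df : is_cderive t f df -> cderive f t = df.
Proof. by case: df => a b [[_ da] [_ db]]; rewrite /cderive !derive1E da db. Qed.

Lemma is_cderive_cst t (c : C) : is_cderive t (fun=> c) 0.
Proof. by split; exact: is_derive_cst. Qed.

Lemma is_cderiveD t f g df dg : is_cderive t f df -> is_cderive t g dg ->
  is_cderive t (fun s => f s + g s) (df + dg).
Proof.
move=> [fR fI] [gR gI]; split.
- have -> : (fun s => Re (f s + g s)) = (fun s => Re (f s)) + (fun s => Re (g s)).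
    by apply/funext => s; rewrite /= raddfD.
  by rewrite raddfD; exact: is_deriveD.
- have -> : (fun s => Im (f s + g s)) = (fun s => Im (f s)) + (fun s => Im (g s)).
    by apply/funext => s; rewrite /= raddfD.
  by rewrite raddfD; exact: is_deriveD.
Qed.

Lemma is_cderiveM t f g df dg : is_cderive t f df -> is_cderive t g dg ->
  is_cderive t (fun s => f s * g s) (df * g t + f t * dg).
Proof.
move=> [fR fI] [gR gI].
have eRe : (fun s => Re (f s * g s)) =
    (fun s => Re (f s)) * (fun s => Re (g s)) - (fun s => Im (f s)) * (fun s => Im (g s)).
  rewrite !mulrfctE opprfctE addrfctE; apply/funext => s /=.
  by case: (f s) => ? ?; case: (g s).
have eIm : (fun s => Im (f s * g s)) =
    (fun s => Re (f s)) * (fun s => Im (g s)) + (fun s => Im (f s)) * (fun s => Re (g s)).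
  rewrite !mulrfctE addrfctE; apply/funext => s /=.
  by case: (f s) => ? ?; case: (g s).
split; [rewrite eRe | rewrite eIm]; apply: is_derive_eq.
all: move: (f t) (g t) => [a b] [c d]; case: df {fR fI} => da db; case: dg {gR gI} => dc dd.
all: by rewrite /GRing.scale /=; ring.
Qed.

Lemma is_cderive_sum t (I : Type) (r : seq I) (F : I -> R -> C) (dF : I -> C) :
  (forall i, is_cderive t (F i) (dF i)) ->
  is_cderive t (fun s => \sum_(i <- r) F i s) (\sum_(i <- r) dF i).
Proof.
move=> dFi; elim: r => [|i r IHr].
  under eq_fun do rewrite big_nil.
  by rewrite big_nil; exact: is_cderive_cst.
under eq_fun do rewrite big_cons.
by rewrite big_cons; exact: is_cderiveD.
Qed.

Lemma is_cderive_conj t f df : is_cderive t f df -> is_cderive t (fun s => (f s)^*) df^*.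
Proof.
case: df => a b [fR fI]; split => /=.
  suff -> : (fun s => Re (f s)^*) = (fun s => Re (f s)) by [].
  by apply/funext => s; case: (f s).
suff -> : (fun s => Im (f s)^*) = - (fun s => Im (f s)) by exact: is_deriveN.
by rewrite opprfctE; apply/funext => s; case: (f s).
Qed.

Lemma near_eq_is_cderive t f g df :
  {near (t : R^o), f =1 g} -> is_cderive t f df -> is_cderive t g df.
Proof.
move=> fg [fR fI].
by split; [apply: near_eq_is_derive fR | apply: near_eq_is_derive fI];
  apply: filterS fg => s ->.
Qed.

Lemma cderivable_is_cderive t f :
  derivable (fun s => Re (f s)) t 1 -> derivable (fun s => Im (f s)) t 1 ->
  is_cderive t f (cderive f t).
Proof. by move=> /derivableP dRe /derivableP dIm; rewrite /cderive !derive1E. Qed.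

Definition is_mderive {m n} t (P : R -> 'M[C]_(m, n)) (dP : 'M[C]_(m, n)) : Prop :=
  forall i j, is_cderive t (fun s => P s i j) (dP i j).

Lemma is_mderive_cst m n t (A : 'M[C]_(m, n)) : is_mderive t (fun=> A) 0.
Proof. by move=> i j; rewrite mxE; exact: is_cderive_cst. Qed.

Lemma near_eq_is_mderive m n t (P Q : R -> 'M[C]_(m, n)) dP :
  {near (t : R^o), P =1 Q} -> is_mderive t P dP -> is_mderive t Q dP.
Proof. by move=> PQ dPt i j; apply: near_eq_is_cderive (dPt i j); apply: filterS PQ => s ->. Qed.

Lemma is_mderiveM m n p t (P : R -> 'M[C]_(m, n)) (Q : R -> 'M[C]_(n, p)) dP dQ :
  is_mderive t P dP -> is_mderive t Q dQ ->
  is_mderive t (fun s => P s *m Q s) (dP *m Q t + P t *m dQ).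
Proof.
move=> dPt dQt i j; rewrite !mxE -big_split /=.
under eq_fun do rewrite mxE.
by apply: is_cderive_sum => k; exact: is_cderiveM.
Qed.

Lemma is_mderive_trace n t (P : R -> 'M[C]_n) dP :
  is_mderive t P dP -> is_cderive t (fun s => \tr (P s)) (\tr dP).
Proof. by move=> dPt; apply: is_cderive_sum => i; exact: dPt. Qed.

Lemma is_mderive_adj t (P : R -> 'M[C]_3) dP :
  is_mderive t P dP -> is_mderive t (fun s => adjmx (P s)) (adjmx dP).
Proof.
move=> dPt i j; rewrite /adjmx !mxE.
under eq_fun do rewrite !mxE.
exact: is_cderive_conj.
Qed.

Lemma SU3_invmx (A : 'M[C]_3) : SU3 A -> invmx A = adjmx A.
Proof.
move=> [AA _]; have [uA _] := mulmx1_unit AA.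
by rewrite -[adjmx A]mul1mx -(mulVmx uA) -mulmxA AA mulmx1.
Qed.

Section SmoothPath.
Variables (eps t : R) (P : R -> 'M[C]_3).
Hypotheses (sP : smooth_SU3_path eps P) (teps : - eps < t < eps).

Lemma smooth_SU3_path_is_mderive : is_mderive t P (mderive P t).
Proof.
move=> i j; have [sRe sIm] := sP.2 i j; rewrite mxE.
by apply: cderivable_is_cderive; [exact: sRe 0%N t teps | exact: sIm 0%N t teps].
Qed.

Lemma smooth_SU3_path_is_mderive_inv :
  is_mderive t (fun s => invmx (P s)) (adjmx (mderive P t)).
Proof.
apply: near_eq_is_mderive (is_mderive_adj smooth_SU3_path_is_mderive).
have : t \in `]- eps, eps[ by rewrite in_itv.
move=> /near_in_itvoo; apply: filterS => s; rewrite in_itv /= => seps.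
by rewrite SU3_invmx //; exact: sP.1.
Qed.

End SmoothPath.

Lemma word_eval_nil (L M : R -> 'M[C]_3) : word_eval L M [::] = fun=> 1.
Proof. by apply/funext => s; rewrite /word_eval big_nil. Qed.

Lemma word_eval_cons (L M : R -> 'M[C]_3) x w :
  word_eval L M (x :: w) = fun s => letter_eval L M s x *m word_eval L M w s.
Proof. by apply/funext => s; rewrite /word_eval big_cons mulmxE. Qed.

Lemma smooth_SU3_word_is_mderive eps t (L M : R -> 'M[C]_3) w :
  smooth_SU3_path eps L -> smooth_SU3_path eps M -> - eps < t < eps ->
  exists dW, is_mderive t (word_eval L M w) dW.
Proof.
move=> sL sM teps; elim: w => [|x w [dW dWt]].
  by rewrite word_eval_nil; exists 0; exact: is_mderive_cst.
have [dX dXt] : exists dX, is_mderive t (fun s => letter_eval L M s x) dX.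
  case: x => [[] []]; rewrite /letter_eval /=; eexists.
  - exact: smooth_SU3_path_is_mderive sL teps.
  - exact: smooth_SU3_path_is_mderive_inv sL teps.
  - exact: smooth_SU3_path_is_mderive sM teps.
  - exact: smooth_SU3_path_is_mderive_inv sM teps.
by rewrite word_eval_cons; eexists; exact: is_mderiveM dXt dWt.
Qed.

Lemma trace_derivatives_diag_eq (L Y : R -> 'M[C]_3) t dY (l m c : C) :
  l != 0 -> c != 0 -> m != l ->
  L t = diag3 l l m -> is_mderive t L (L t *m diag3 c (- c) 0) -> is_mderive t Y dY ->
  cderive (fun s => \tr (Y s)) t = 0 ->
  cderive (fun s => \tr (L s *m Y s)) t = 0 ->
  cderive (fun s => \tr (L s *m (L s *m Y s))) t = 0 ->
  Y t 0 0 = Y t 1 1.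
Proof.
move=> l0 c0 ml Lt dL dYt.
have dLY := is_mderiveM dL dYt.
rewrite (cderive_val (is_mderive_trace dYt)).
rewrite (cderive_val (is_mderive_trace dLY)).
rewrite (cderive_val (is_mderive_trace (is_mderiveM dL dLY))) Lt.
rewrite !mulmxDr -!mulmxA !mxtraceD !mxtrace3 !diag3_mulE /= => E0 E1 E2.
apply: (diag_eq_of_moments l0 c0 ml E0); [rewrite -E1 | rewrite -E2]; ring.
Qed.

Section Unitary.
Implicit Types A : 'M[C]_3.

Lemma adjmxE A i j : adjmx A i j = (A j i)^*.
Proof. by rewrite !mxE. Qed.

Lemma unitary_row_norm A i : A *m adjmx A = 1%:M ->
  `|A i 0| ^+ 2 + `|A i 1| ^+ 2 + `|A i 2| ^+ 2 = 1.
Proof.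
move/(congr1 (fun X : 'M[C]_3 => X i i)); rewrite /= mulmx3E !adjmxE !mxE eqxx.
by rewrite !sqr_normc.
Qed.

Lemma unitary_col_norm A j : adjmx A *m A = 1%:M ->
  `|A 0 j| ^+ 2 + `|A 1 j| ^+ 2 + `|A 2 j| ^+ 2 = 1.
Proof.
move/(congr1 (fun X : 'M[C]_3 => X j j)); rewrite /= mulmx3E !adjmxE !mxE eqxx.
by rewrite !sqr_normc ![_^* * _]mulrC.
Qed.

Definition G_eta_shape (z : C) A : Prop :=
  [/\ A 0 0 = A 1 1, A 1 2 = z * A 0 2, A 2 0 = z * A 2 1 & A 1 0 = z ^+ 2 * A 0 1].

Lemma unitary_G_eta_shape_corner_neq0 A :
  adjmx A *m A = 1%:M -> A 0 0 = A 1 1 -> A 0 2 * A 2 0 = A 1 2 * A 2 1 ->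
  `|A 0 2| = `|A 1 2| -> A 0 2 != 0 ->
  exists z, `|z| = 1 /\ G_eta_shape z A.
Proof.
move=> AA d01 cross n02 a0; exists (A 1 2 / A 0 2).
set z := A 1 2 / A 0 2.
have e12 : A 1 2 = z * A 0 2 by rewrite divfK.
have zn : `|z| = 1 by rewrite normf_div -n02 divff // normr_eq0.
have zz : z^* * z = 1 by rewrite mulrC -sqr_normc zn expr1n.
have e20 : A 2 0 = z * A 2 1.
  by apply: (mulfI a0); rewrite cross e12 mulrCA mulrA.
split=> //; split=> //; clearbody z.
(* columns 0 and 1 are orthogonal to column 2 *)
have c02 := congr1 (fun X : 'M[C]_3 => X 0 2) AA.
have c12 := congr1 (fun X : 'M[C]_3 => X 1 2) AA.
rewrite /= !mulmx3E !adjmxE !mxE /= e12 e20 -d01 !rmorphM /= in c02 c12.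
have : A 0 2 * ((A 1 0)^* * z - z^* * (A 0 1)^*) = 0.
  transitivity ((A 0 0)^* * A 0 2 + (A 1 0)^* * (z * A 0 2) + z^* * (A 2 1)^* * A 2 2
    - z^* * ((A 0 1)^* * A 0 2 + (A 0 0)^* * (z * A 0 2) + (A 2 1)^* * A 2 2)
    + (z^* * z - 1) * (A 0 0)^* * A 0 2); first by ring.
  by rewrite c02 c12 zz; ring.
move/eqP; rewrite mulf_eq0 (negbTE a0) subr_eq0 => /eqP/(congr1 conjc).
rewrite !rmorphM /= !conjcK => e10.
by rewrite -[A 1 0]mulr1 -zz mulrA e10; ring.
Qed.

Lemma unitary_G_eta_shape_corner_eq0 A :
  A *m adjmx A = 1%:M -> adjmx A *m A = 1%:M -> A 0 0 = A 1 1 ->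
  A 0 2 = 0 -> `|A 0 2| = `|A 1 2| ->
  exists z, `|z| = 1 /\ G_eta_shape z A.
Proof.
(* column 2 is then a unit multiple of e_2, so row 2 vanishes off the diagonal *)
move=> AA' A'A d01 a02 n02.
have a12 : A 1 2 = 0 by apply: normr0_eq0; rewrite -n02 a02 normr0.
have row0 := unitary_row_norm 0 AA'.
have row2 := unitary_row_norm 2 AA'.
have col0 := unitary_col_norm 0 A'A.
have col2 := unitary_col_norm 2 A'A.
rewrite a02 a12 normr0 expr0n !add0r /= in col2.
rewrite col2 -[1 in RHS]add0r in row2; move/addIr/eqP: row2.
rewrite paddr_eq0 ?exprn_ge0 // !expf_eq0 !normr_eq0 /= => /andP[/eqP a20 /eqP a21].
have [|z [zn e10]] := @norm_eq_exists_unit_sqr _ (A 0 1) (A 1 0).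
  apply/eqP; rewrite -(@eqrXn2 _ 2) //; apply/eqP/(addrI (`|A 0 0| ^+ 2)).
  by move: row0 col0; rewrite a02 a20 normr0 expr0n /= !addr0 => -> ->.
by exists z; split=> //; split; rewrite ?a02 ?a12 ?a20 ?a21 ?mulr0.
Qed.

Lemma unitary_G_eta_shape A :
  A *m adjmx A = 1%:M -> A 0 0 = A 1 1 -> A 0 2 * A 2 0 = A 1 2 * A 2 1 ->
  `|A 0 2| = `|A 1 2| -> exists z, `|z| = 1 /\ G_eta_shape z A.
Proof.
move=> AA' d01 cross n02; have A'A := mulmx1C AA'.
have [a02|a02] := eqVneq (A 0 2) 0.
  exact: unitary_G_eta_shape_corner_eq0.
exact: unitary_G_eta_shape_corner_neq0.
Qed.

Lemma ord3P (i : 'I_3) : [\/ i = 0, i = 1 | i = 2].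
Proof. by case: i => [[|[|[|//]]] ?]; [apply: Or31 | apply: Or32 | apply: Or33]; apply/val_inj. Qed.

Lemma G_eta_of_shape t A : SU3 A -> expi t != 0 -> G_eta_shape (expi t) A -> G_eta t A.
Proof.
move=> SA e0 [d01 e12 e20 e10]; split=> //.
exists (A 0 0), (A 1 0 / expi t), (A 0 2), (A 2 0), (A 2 2).
apply/matrixP => i j; rewrite mxE.
by case: (ord3P i) => ->; case: (ord3P j) => -> /=; rewrite ?d01 ?e12 ?e20 ?e10; field.
Qed.

Lemma expi_surj (w : C) : `|w| = 1 -> exists t : R, 0 <= t < 2 * pi /\ expi t = w.
Proof.
case: w => a b; rewrite normc_def /= => /(congr1 (fun x => Re x ^+ 2)) /=.
rewrite sqr_sqrtr ?addr_ge0 ?sqr_ge0 // expr1n => ab1.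
have aI : -1 <= a <= 1 by apply/andP; split; nra.
have ca : cos (acos a) = a by apply: acosK; rewrite in_itv /=.
have sa : sin (acos a) = `|b|.
  by rewrite sin_acos // -sqrtr_sqr; congr Num.sqrt; rewrite -ab1; ring.
have p0 := pi_gt0 R; have a0 := acos_ge0 aI; have api := acos_lepi aI.
have [b0|b0] := leP 0 b.
  exists (acos a); split; first by apply/andP; split => //; lra.
  by rewrite /expi ca sa ger0_norm.
exists (- acos a + pi *+ 2); split.
  have : 0 < acos a by apply: acos_gt0; apply/andP; split; [case/andP: aI | nra].
  by move=> ?; apply/andP; split; rewrite mulr2n; lra.
by rewrite /expi cosD2pi sinD2pi cosN sinN ca sa ltr0_norm // opprK.
Qed.

Lemma exists_G_eta A z : SU3 A -> `|z| = 1 -> G_eta_shape z A ->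
  exists eta : R, 0 <= eta < 2 * pi /\ G_eta eta A.
Proof.
move=> SA zn; have [eta [etaI ez]] := expi_surj zn; rewrite -ez in zn * => Az.
exists eta; split=> //; apply: G_eta_of_shape => //.
by rewrite -normr_eq0 zn oner_eq0.
Qed.

End Unitary.

Lemma smooth_words_diag_eq eps t (L M : R -> 'M[C]_3) (l m c : C) :
  smooth_SU3_path eps L -> smooth_SU3_path eps M -> - eps < t < eps ->
  l != 0 -> c != 0 -> m != l ->
  L t = diag3 l l m -> mderive L t = L t *m diag3 c (- c) 0 ->
  (forall w, cderive (fun s => \tr (word_eval L M w s)) t = 0) ->
  forall w, word_eval L M w t 0 0 = word_eval L M w t 1 1.
Proof.
move=> sL sM teps l0 c0 ml Lt dLt trW w.
have dL := smooth_SU3_path_is_mderive sL teps; rewrite dLt in dL.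
have [dW dWt] := smooth_SU3_word_is_mderive w sL sM teps.
apply: (trace_derivatives_diag_eq l0 c0 ml Lt dL dWt (trW w)).
  by have := trW ((true, true) :: w); rewrite word_eval_cons.
by have := trW [:: (true, true), (true, true) & w]; rewrite !word_eval_cons.
Qed.

Lemma words_diag_eq_G_eta_shape t (L M : R -> 'M[C]_3) (l m : C) :
  m != l -> SU3 (M t) -> L t = diag3 l l m ->
  (forall w, word_eval L M w t 0 0 = word_eval L M w t 1 1) ->
  exists z, `|z| = 1 /\ G_eta_shape z (M t).
Proof.
move=> ml SA Lt diagW; have [AA _] := SA.
have W3 x : word_eval L M [:: (false, true); (true, true); x] t =
    M t *m (diag3 l l m *m letter_eval L M t x).
  by rewrite !word_eval_cons word_eval_nil mulmx1 /letter_eval /= Lt.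
apply: unitary_G_eta_shape => //.
- by have := diagW [:: (false, true)]; rewrite word_eval_cons word_eval_nil mulmx1.
- apply: (diag3_mul_entry_eq ml); first by rewrite -(W3 (false, true)) diagW.
  have := diagW [:: (false, true); (false, true)].
  by rewrite !word_eval_cons word_eval_nil mulmx1.
- apply/eqP; rewrite -(@eqrXn2 _ 2) // !sqr_normc -!adjmxE.
  apply/eqP/(diag3_mul_entry_eq ml); last by rewrite AA !mxE.
  by have := W3 (false, false); rewrite /letter_eval /= SU3_invmx // => <-; rewrite diagW.
Qed.

End Paths.

Theorem lemma6p6 (R : realType) (eps : R) (L M : R -> 'M[R[i]]_3)
  (lambda : R[i]) (alpha : R) :
  0 < eps ->
  smooth_SU3_path eps L -> smooth_SU3_path eps M ->
  `|lambda| = 1 ->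
  (forall n : nat, (0 < n)%N -> lambda ^+ n != 1) ->
  alpha != 0 ->
  L 0 = diag_mx (\row_(i < 3) [:: lambda; lambda; lambda ^- 2]`_i) ->
  invmx (L 0) *m mderive L 0
    = diag_mx (\row_(i < 3) [:: 0 +i* alpha; 0 +i* (- alpha); 0]`_i) ->
  (forall w : seq (bool * bool),
      cderive (fun t => \tr (word_eval L M w t)) 0 = 0) ->
  exists eta : R, 0 <= eta < 2 * pi /\ G_eta eta (M 0).
Proof.
move=> eps0 sL sM nl inf a0 L0 dL0 trW.
have e0 : - eps < 0 < eps by apply/andP; split; lra.
have l0 : lambda != 0 by rewrite -normr_eq0 nl oner_eq0.
have ml : lambda ^- 2 != lambda.
  apply: contra (inf 3%N isT) => /eqP ml.
  by rewrite exprSr -[X in _ * X]ml mulfV // expf_eq0.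
have c0 : 0 +i* alpha != 0 :> R[i] by rewrite eq_complex /= negb_and a0 orbT.
have dL : mderive L 0 = L 0 *m diag3 (0 +i* alpha) (- (0 +i* alpha)) 0.
  have uL0 : L 0 \in unitmx by case: (sL.1 0 e0) => /mulmx1_unit[].
  have -> : - (0 +i* alpha) = 0 +i* (- alpha) :> R[i].
    by apply/eqP; rewrite eq_complex /= oppr0 !eqxx.
  by rewrite /diag3 -dL0 mulKVmx.
have diagW := smooth_words_diag_eq sL sM e0 l0 c0 ml L0 dL trW.
have [z [zn Mz]] := words_diag_eq_G_eta_shape ml (sM.1 0 e0) L0 diagW.
exact: exists_G_eta (sM.1 0 e0) zn Mz.
Qed.
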